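(* Let $G$ be a finite simple graph without isolated vertices and let $d\ge 2$ be an integer. Then Dom has a winning strategy in the $(d:1)$-game played on $G$ (whichever player starts).
   Context: For a vertex $v$, $N[v]$ is its closed neighborhood. Colors are $p$ (purple) and $b$ (blue); $V_p,V_b$ denote the current sets of vertices of each color. A single coloring step (by either player, who may use either color) consists of choosing a vertex $v$ and a color $c$ such that (i) $v$ is uncolored and (ii) some $u\in N[v]$ satisfies $N[u]\cap V_c=\emptyset$ (evaluated just before this step); then $v$ gets color $c$. In the $(d:s)$-game, Dom and Sepy take turns; in each of his turns Dom sequentially performs exactly $d$ such coloring steps (or fewer only when fewer legal steps remain), and in each of his turns Sepy performs at most $s$ such steps (he may also pass). The game terminates as soon as either (s* ) some vertex $v$ has $N[v]\subseteq V_p$ or $N[v]\subseteq V_b$ — Sepy wins; or (d* ) both $V_p$ and $V_b$ are dominating sets of $G$ — Dom wins. *)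

From mathcomp Require Import all_boot.
Set Implicit Arguments. Unset Strict Implicit. Unset Printing Implicit Defensive.

(* A finite simple graph: vertex type T : finType, adjacency e : rel T
   (assumed symmetric and irreflexive in the theorem).
   A game state is the pair (V_p, V_b) of purple / blue vertex sets.
   Colours: true = purple (p), false = blue (b). *)

Definition state (T : finType) := ({set T} * {set T})%type.

Definition cnbhd (T : finType) (e : rel T) (v : T) : {set T} :=
  [set u | (u == v) || e v u].

Definition colorset (T : finType) (st : state T) (c : bool) : {set T} :=
  if c then st.1 else st.2.

Definition legal (T : finType) (e : rel T) (st : state T) (v : T) (c : bool) : bool :=
  [&& v \notin st.1, v \notin st.2 &
      [exists u in cnbhd e v, [disjoint cnbhd e u & colorset st c]]].

Definition color (T : finType) (st : state T) (v : T) (c : bool) : state T :=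
  if c then (v |: st.1, st.2) else (st.1, v |: st.2).

Definition dominating (T : finType) (e : rel T) (A : {set T}) : bool :=
  [forall v, ~~ [disjoint cnbhd e v & A]].

Definition sepy_won (T : finType) (e : rel T) (st : state T) : bool :=
  [exists v, (cnbhd e v \subset st.1) || (cnbhd e v \subset st.2)].

Definition dom_won (T : finType) (e : rel T) (st : state T) : bool :=
  dominating e st.1 && dominating e st.2.

Definition ended (T : finType) (e : rel T) (st : state T) : bool :=
  sepy_won e st || dom_won e st.

(* Positions from which Dom can force a win in the (d:s)-game.
   [domWinsD e d s k st]: it is Dom's turn, he still has to perform k steps.
   [domWinsS e d s k st]: it is Sepy's turn, he may still perform up to k steps
   (and may end his turn at any moment).
   Least fixed point = Dom forces termination with condition d-star. *)
Inductive domWinsD (T : finType) (e : rel T) (d s : nat) : nat -> state T -> Prop :=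
| DW_done k st : dom_won e st -> domWinsD e d s k st
| DW_step k st v c :
    ~~ ended e st -> legal e st v c ->
    domWinsD e d s k (color st v c) -> domWinsD e d s k.+1 st
| DW_end st : ~~ ended e st -> domWinsS e d s s st -> domWinsD e d s 0 st
| DW_stuck k st : ~~ ended e st -> (forall v c, ~~ legal e st v c) ->
    domWinsS e d s s st -> domWinsD e d s k st
with domWinsS (T : finType) (e : rel T) (d s : nat) : nat -> state T -> Prop :=
| SW_done k st : dom_won e st -> domWinsS e d s k st
| SW_play k st :
    ~~ ended e st ->
    domWinsD e d s d st ->                       (* Sepy ends his turn now *)
    (forall v c, 0 < k -> legal e st v c ->
       domWinsS e d s k.-1 (color st v c)) ->   (* Sepy makes one more step *)
    domWinsS e d s k st.

Definition init_state (T : finType) : state T := (set0, set0).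

Definition dom_wins_dom_first (T : finType) (e : rel T) (d s : nat) : Prop :=
  domWinsD e d s d (init_state T).
Definition dom_wins_sepy_first (T : finType) (e : rel T) (d s : nat) : Prop :=
  domWinsS e d s s (init_state T).

From mathcomp Require Import all_boot zify.
Set Implicit Arguments. Unset Strict Implicit. Unset Printing Implicit Defensive.

(* A coloured vertex is exposed if none of its neighbours has the other colour;
   Sepy has won exactly when some exposed vertex has no uncoloured neighbour.
   Dom keeps at most one exposed vertex, and ends each of his turns with it
   safe: it has two uncoloured neighbours, or an uncoloured neighbour whose only
   neighbour it is (Sepy may not give that neighbour its colour).  A single step
   of Sepy then cannot win, and creates at most one new exposed vertex; Dom's
   first step repairs it by giving one of its uncoloured neighbours the other
   colour, and since d >= 2 he can repair the old one next.  Without exposed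
   vertices, a vertex not dominated by one of the colours is uncoloured, and
   colouring it or its unique neighbour leaves at most one, safe, exposed vertex.
   Every step colours a vertex, so the game ends, and never with Sepy's win. *)

Lemma neq_negb (b b' : bool) : b != b' -> b = ~~ b'.
Proof. by case: b; case: b'. Qed.

Lemma disjoint_setU1 (T : finType) (A B : {set T}) v :
  v \notin B -> [disjoint A & B] -> [disjoint v |: A & B].
Proof.
rewrite !disjoint_subset => vB /subsetP AB; apply/subsetP => x /setU1P[-> | /AB //].
by rewrite inE.
Qed.

Section ColouringGame.
Variables (T : finType) (e : rel T).
Implicit Types (st : state T) (c : bool) (u v w x y z : T).

Definition colored st : {set T} := st.1 :|: st.2.

Definition disjoint_colors st : bool := [disjoint st.1 & st.2].

Definition exposed st c w : bool :=
  (w \in colorset st c) && [disjoint cnbhd e w & colorset st (~~ c)].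

Definition free_nbrs st w : {set T} := [set y | e w y] :\: colored st.

Definition pendant w y : bool := [set z | e y z] \subset [set w].

Definition safe st w : bool :=
  (1 < #|free_nbrs st w|) || [exists y in free_nbrs st w, pendant w y].

Definition unique_exposed st : Prop :=
  forall c c' w w', exposed st c w -> exposed st c' w' -> w = w'.

Definition dom_ready st : Prop :=
  [/\ disjoint_colors st, ~~ sepy_won e st & unique_exposed st].

Definition sepy_ready st : Prop :=
  [/\ disjoint_colors st, unique_exposed st & forall c w, exposed st c w -> safe st w].

Lemma cnbhd_self v : v \in cnbhd e v.
Proof. by rewrite inE eqxx. Qed.

Lemma cnbhd_nbr v u : e v u -> u \in cnbhd e v.
Proof. by rewrite inE => ->; rewrite orbT. Qed.

Lemma colorset_color st v c c' :
  colorset (color st v c) c' = if c' == c then v |: colorset st c' else colorset st c'.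
Proof. by case: c; case: c'. Qed.

Lemma colorset_sub_color st v c c' : colorset st c' \subset colorset (color st v c) c'.
Proof. by rewrite colorset_color; case: ifP => // _; apply: subsetUr. Qed.

Lemma colorset_color_self st v c : v \in colorset (color st v c) c.
Proof. by rewrite colorset_color eqxx setU11. Qed.

Lemma colored_color st v c : colored (color st v c) = v |: colored st.
Proof. by case: c; rewrite /colored /=; [rewrite setUA | rewrite setUCA]. Qed.

Lemma colorset_colored st c : colorset st c \subset colored st.
Proof. by case: c; [apply: subsetUl | apply: subsetUr]. Qed.

Lemma colorset_uncolored st x c : x \notin colored st -> x \notin colorset st c.
Proof. exact/contra/subsetP/colorset_colored. Qed.

Lemma coloredP st x : reflect (exists c, x \in colorset st c) (x \in colored st).
Proof.
apply: (iffP setUP) => [[] xc | [[] xc]]; by [exists true | exists false | left | right].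
Qed.

Lemma colorset_uniq st x c c' :
  disjoint_colors st -> x \in colorset st c -> x \in colorset st c' -> c' = c.
Proof.
move=> dis; case: c c' => [] [] //= x1 x2.
  by rewrite (disjointFr dis x1) in x2.
by rewrite (disjointFl dis x1) in x2.
Qed.

Lemma disjoint_colorsN st c :
  disjoint_colors st -> [disjoint colorset st c & colorset st (~~ c)].
Proof. by case: c => //= dis; rewrite disjoint_sym. Qed.

Lemma disjoint_colors_color st v c :
  disjoint_colors st -> v \notin colored st -> disjoint_colors (color st v c).
Proof.
rewrite /disjoint_colors in_setU negb_or => dis /andP[v1 v2].
case: c => /=; first exact: disjoint_setU1.
by rewrite disjoint_sym; apply: disjoint_setU1; rewrite // disjoint_sym.
Qed.

Lemma in_free_nbrs st w y : (y \in free_nbrs st w) = (y \notin colored st) && e w y.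
Proof. by rewrite !inE. Qed.

Lemma free_nbrs_uncolored st w y : y \in free_nbrs st w -> y \notin colored st.
Proof. by rewrite in_free_nbrs => /andP[]. Qed.

Lemma free_nbrs_nbr st w y : y \in free_nbrs st w -> e w y.
Proof. by rewrite in_free_nbrs => /andP[]. Qed.

Lemma free_nbrs_color st v c w : free_nbrs (color st v c) w = free_nbrs st w :\ v.
Proof. by rewrite /free_nbrs colored_color setDDl setUC. Qed.

Lemma card_uncolored_color st v c :
  v \notin colored st -> #|~: colored (color st v c)| < #|~: colored st|.
Proof.
by move=> vU; rewrite colored_color; apply/proper_card; rewrite properC properUr // sub1set.
Qed.

Lemma exposed_colorset st c w : exposed st c w -> w \in colorset st c.
Proof. by case/andP. Qed.

Lemma exposed_nbrN st c w x : exposed st c w -> e w x -> x \notin colorset st (~~ c).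
Proof. by case/andP => _ dis /cnbhd_nbr xN; rewrite (disjointFr dis xN). Qed.

Lemma exposed_nbr_color st c c' w x :
  exposed st c w -> e w x -> x \in colorset st c' -> c' = c.
Proof.
move=> wexp ewx; case: (c' =P c) => // /eqP/neq_negb ->.
by rewrite (negPf (exposed_nbrN wexp ewx)).
Qed.

Lemma exposed_color st v c c' w :
  exposed (color st v c) c' w -> w = v \/ exposed st c' w.
Proof.
case/andP => wc dis; case: (eqVneq w v) => [-> | wv]; [by left | right].
apply/andP; split; last exact: disjointWr (colorset_sub_color _ _ _ _) dis.
by move: wc; rewrite colorset_color; case: ifP => // _; rewrite in_setU1 (negPf wv).
Qed.

Lemma legalE st v c :
  legal e st v c =
  (v \notin colored st) && [exists u in cnbhd e v, [disjoint cnbhd e u & colorset st c]].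
Proof. by rewrite /legal in_setU negb_or andbA. Qed.

Lemma legal_uncolored st v c : legal e st v c -> v \notin colored st.
Proof. by rewrite legalE => /andP[]. Qed.

Lemma sepy_wonPn st : disjoint_colors st ->
  reflect (forall c w, exposed st c w -> 0 < #|free_nbrs st w|) (~~ sepy_won e st).
Proof.
move=> dis; apply: (iffP idP) => [notwon c w wexp | free].
  rewrite card_gt0; apply: contraNneq notwon => free0.
  have sub : cnbhd e w \subset colorset st c.
    apply/subsetP => x; rewrite inE => /orP[/eqP-> | ewx]; first exact: exposed_colorset.
    have /coloredP[c' xc'] : x \in colored st.
      by apply: contraT => xU; rewrite -(in_set0 x) -free0 in_free_nbrs xU.
    by rewrite -(exposed_nbr_color wexp ewx xc').
  by apply/existsP; exists w; case: c {wexp} sub => /= ->; rewrite ?orbT.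
have closed c w : ~~ (cnbhd e w \subset colorset st c).
  apply/negP => sub.
  have wexp : exposed st c w.
    rewrite /exposed (subsetP sub _ (cnbhd_self w)).
    exact: disjointWl sub (disjoint_colorsN c dis).
  have /card_gt0P[y yfree] := free c w wexp.
  move: (colorset_uncolored c (free_nbrs_uncolored yfree)).
  by rewrite (subsetP sub _ (cnbhd_nbr (free_nbrs_nbr yfree))).
by apply/existsP => -[w]; rewrite (negPf (closed true w)) (negPf (closed false w)).
Qed.

Lemma undominated_vertex st :
  ~~ dom_won e st -> exists u c, [disjoint cnbhd e u & colorset st c].
Proof.
rewrite /dom_won /dominating negb_and => /orP[] /forallPn[u]; rewrite negbK => udis.
  by exists u, true.
by exists u, false.
Qed.

Lemma sepy_ready_unexposed st :
  disjoint_colors st -> (forall c w, ~~ exposed st c w) -> sepy_ready st.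
Proof. by move=> dis none; split => // [c c' w w' | c w]; rewrite (negPf (none c w)). Qed.

Lemma sepy_ready_dom_ready st : sepy_ready st -> dom_ready st.
Proof.
case=> dis one_exposed all_safe; split => //; apply/(sepy_wonPn dis) => c w.
by case/all_safe/orP => [/ltnW // | /exists_inP[p pfree _]]; apply/card_gt0P; exists p.
Qed.

Lemma sepy_ready_init : sepy_ready (init_state T).
Proof.
apply: sepy_ready_unexposed => [|c w]; last by rewrite /exposed; case: c; rewrite /= inE.
by rewrite /disjoint_colors disjoints_subset sub0set.
Qed.

Lemma dom_ready_not_ended st : dom_ready st -> ~~ dom_won e st -> ~~ ended e st.
Proof. by case=> _ notwon _ notdom; rewrite /ended negb_or notwon. Qed.

Hypotheses (e_sym : symmetric e) (e_irr : irreflexive e).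
Hypothesis no_isolated : forall v, exists u, e v u.

Lemma pendant_nbr w y z : pendant w y -> e y z -> z = w.
Proof. by move=> py eyz; apply/set1P; apply: (subsetP py); rewrite inE. Qed.

Lemma legal_nbr_notin st x c : legal e st x c -> exists2 y, e x y & y \notin colorset st c.
Proof.
rewrite legalE => /andP[_ /exists_inP[u]]; rewrite inE => /orP[/eqP-> | exu] udis.
  by have [y exy] := no_isolated x; exists y; rewrite // (disjointFr udis (cnbhd_nbr exy)).
by exists u; rewrite // (disjointFr udis (cnbhd_self u)).
Qed.

Lemma repair_legal st c w y : exposed st c w -> y \in free_nbrs st w -> legal e st y (~~ c).
Proof.
case/andP=> _ wdis yfree; rewrite legalE (free_nbrs_uncolored yfree).
by apply/exists_inP; exists w; rewrite // cnbhd_nbr // e_sym (free_nbrs_nbr yfree).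
Qed.

Lemma exposed_repair st c w y c' z :
  disjoint_colors st -> exposed st c w -> y \in free_nbrs st w ->
  exposed (color st y (~~ c)) c' z -> exposed st c' z /\ z != w.
Proof.
move=> dis wexp yfree zexp; have ewy := free_nbrs_nbr yfree.
have dis' := disjoint_colors_color (~~ c) dis (free_nbrs_uncolored yfree).
have yc := colorset_color_self st y (~~ c).
have wc := subsetP (colorset_sub_color st y (~~ c) c) _ (exposed_colorset wexp).
case: (exposed_color zexp) => [zy | zexp0].
  rewrite zy in zexp; have eyw : e y w by rewrite e_sym.
  have Ec' := colorset_uniq dis' yc (exposed_colorset zexp).
  by have := exposed_nbr_color zexp eyw wc; rewrite Ec'; case: (c).
split => //; apply: contraTneq zexp => ->; apply/negP => wexp'.
have Ec' := colorset_uniq dis' wc (exposed_colorset wexp').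
by have := exposed_nbr_color wexp' ewy yc; rewrite Ec'; case: (c).
Qed.

Lemma pendant_move_unexposes st v c1 x c :
  e v x -> pendant v x -> v \in colorset st c1 -> legal e st x c ->
  ~~ exposed (color st x c) c1 v.
Proof.
move=> evx px vc1 /legal_nbr_notin[y exy]; rewrite (pendant_nbr px exy) => vc.
apply/negP => vexp; have Ec := exposed_nbr_color vexp evx (colorset_color_self st x c).
by rewrite Ec vc1 in vc.
Qed.

Lemma legal_exposed_free st x c c' : disjoint_colors st -> legal e st x c ->
  exposed (color st x c) c' x -> 0 < #|free_nbrs (color st x c) x|.
Proof.
move=> dis L xexp; have [y exy yc] := legal_nbr_notin L.
apply/card_gt0P; exists y; rewrite free_nbrs_color in_setD1 in_free_nbrs exy andbT.
have -> /= : y != x by apply: contraTneq exy => ->; rewrite e_irr.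
apply/coloredP => -[c0 yc0].
have dis' := disjoint_colors_color c dis (legal_uncolored L).
have Ec' := colorset_uniq dis' (colorset_color_self st x c) (exposed_colorset xexp).
have E0 := exposed_nbr_color xexp exy (subsetP (colorset_sub_color st x c c0) _ yc0).
by rewrite E0 Ec' in yc0; rewrite yc0 in yc.
Qed.

Lemma safe_after_move st v c1 x c :
  safe st v -> exposed st c1 v -> legal e st x c -> exposed (color st x c) c1 v ->
  0 < #|free_nbrs (color st x c) v|.
Proof.
rewrite free_nbrs_color => /orP[two | /exists_inP[p pfree pp]] vexp L vexp'.
  by move: two; rewrite (cardsD1 x); case: (_ \in _) => /=; lia.
have evp := free_nbrs_nbr pfree.
apply/card_gt0P; exists p; rewrite in_setD1 pfree andbT.
apply: contraTneq vexp' => px; rewrite px in evp pp.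
exact: pendant_move_unexposes evp pp (exposed_colorset vexp) L.
Qed.

Lemma safe_after_repair st v c1 x c y :
  safe st v -> exposed st c1 v -> legal e st x c -> y \in free_nbrs (color st x c) x ->
  exposed (color (color st x c) y (~~ c)) c1 v ->
  0 < #|free_nbrs (color (color st x c) y (~~ c)) v|.
Proof.
move=> vsafe vexp L yfree vexp''; rewrite !free_nbrs_color.
have exy := free_nbrs_nbr yfree.
have vcol : v \in colored st := subsetP (colorset_colored st c1) _ (exposed_colorset vexp).
have vexp' : exposed (color st x c) c1 v.
  case: (exposed_color vexp'') => // vy; move: (free_nbrs_uncolored yfree).
  by rewrite -vy colored_color setU1r.
case/orP: vsafe => [two | /exists_inP[p pfree pp]].
  case: (ltnP 0 _) => // empty.
  (* Then x and y, which have opposite colours, are both adjacent to v. *)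
  have /andP[xfreev yfreev] : (x \in free_nbrs st v) && (y \in free_nbrs st v :\ x).
    move: two (cardsD1 x (free_nbrs st v)) (cardsD1 y (free_nbrs st v :\ x)) empty.
    by case: (_ \in _); case: (_ \in _) => /=; lia.
  have evx := free_nbrs_nbr xfreev.
  have evy := free_nbrs_nbr (setD1P yfreev).2.
  have xc : x \in colorset (color (color st x c) y (~~ c)) c.
    exact: subsetP (colorset_sub_color _ y (~~ c) c) _ (colorset_color_self st x c).
  have := exposed_nbr_color vexp'' evy (colorset_color_self _ y (~~ c)).
  by rewrite (exposed_nbr_color vexp'' evx xc); case: (c1).
have evp := free_nbrs_nbr pfree.
apply/card_gt0P; exists p; rewrite !in_setD1 pfree andbT; apply/andP; split.
  (* The only neighbour of y would be v, but y is adjacent to the uncoloured x. *)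
  apply: contraTneq (legal_uncolored L) => py; rewrite py in pp.
  by rewrite (pendant_nbr pp (_ : e y x)) ?vcol // e_sym.
apply: contraTneq vexp' => px; rewrite px in evp pp.
exact: pendant_move_unexposes evp pp (exposed_colorset vexp) L.
Qed.

Lemma sepy_move_not_won st x c :
  sepy_ready st -> legal e st x c -> ~~ sepy_won e (color st x c).
Proof.
case=> dis _ all_safe L; have dis' := disjoint_colors_color c dis (legal_uncolored L).
apply/(sepy_wonPn dis') => c' w wexp'.
case: (exposed_color wexp') => [wx | wexp]; last first.
  exact: safe_after_move (all_safe _ _ wexp) wexp L wexp'.
by subst w; apply: legal_exposed_free dis L wexp'.
Qed.

Lemma sepy_move_response st x c : sepy_ready st -> legal e st x c ->
  dom_ready (color st x c) \/
  exists2 y, legal e (color st x c) y (~~ c) & dom_ready (color (color st x c) y (~~ c)).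
Proof.
move=> ready L; have notwon := sepy_move_not_won ready L.
case: ready => dis one_exposed all_safe; have xU := legal_uncolored L.
have dis' := disjoint_colors_color c dis xU.
have [xexp | xnexp] := boolP (exposed (color st x c) c x); [right | left].
  have /card_gt0P[y yfree] := (sepy_wonPn dis' notwon) _ _ xexp.
  exists y; first exact: repair_legal xexp yfree.
  have dis'' := disjoint_colors_color (~~ c) dis' (free_nbrs_uncolored yfree).
  have old c' w : exposed (color (color st x c) y (~~ c)) c' w -> exposed st c' w.
    case/(exposed_repair dis' xexp yfree) => wexp' wx.
    by case: (exposed_color wexp') => // wx'; rewrite wx' eqxx in wx.
  split => //; last by move=> ? ? ? ? /old w1exp /old; apply: one_exposed w1exp.
  apply/(sepy_wonPn dis'') => c' w wexp''.
  exact: safe_after_repair (all_safe _ _ (old _ _ wexp'')) (old _ _ wexp'') L yfree wexp''.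
have old c' w : exposed (color st x c) c' w -> exposed st c' w.
  move=> wexp'; case: (exposed_color wexp') => // wx; subst w.
  have Ec := colorset_uniq dis' (colorset_color_self st x c) (exposed_colorset wexp').
  by rewrite Ec in wexp'; rewrite wexp' in xnexp.
split => // c1 c2 w1 w2 /old w1exp /old w2exp; exact: one_exposed w1exp w2exp.
Qed.

Lemma safe_color_self st v c : safe st v -> safe (color st v c) v.
Proof.
rewrite /safe; suff -> : free_nbrs (color st v c) v = free_nbrs st v by [].
rewrite free_nbrs_color; apply/setDidPl; rewrite disjoint_sym disjoints1.
by rewrite in_free_nbrs e_irr andbF.
Qed.

Definition sound_move st v c : Prop :=
  legal e st v c /\ (safe st v \/ exists2 w, e v w & w \in colorset st (~~ c)).

Lemma sepy_ready_color st v c :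
  disjoint_colors st -> (forall c' w, ~~ exposed st c' w) -> sound_move st v c ->
  sepy_ready (color st v c).
Proof.
move=> dis none [/legal_uncolored vU vgood]; have dis' := disjoint_colors_color c dis vU.
have onlyv c' w : exposed (color st v c) c' w -> w = v.
  by case/exposed_color => // wexp; move: (none c' w); rewrite wexp.
split => //; first by move=> c1 c2 w1 w2 /onlyv -> /onlyv ->.
move=> c' w wexp; have wv := onlyv _ _ wexp; subst w.
case: vgood => [/safe_color_self // | [w' evw' w'c]].
have Ec' := colorset_uniq dis' (colorset_color_self st v c) (exposed_colorset wexp).
have := exposed_nbrN wexp evw'; rewrite Ec'.
by rewrite (subsetP (colorset_sub_color st v c (~~ c)) _ w'c).
Qed.

Lemma undominated_uncolored st u c :
  (forall c' w, ~~ exposed st c' w) -> [disjoint cnbhd e u & colorset st c] ->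
  u \notin colored st.
Proof.
move=> none udis; apply/coloredP => -[c0 uc0].
case: (c0 =P c) => [E | /eqP/neq_negb E].
  by rewrite E (disjointFr udis (cnbhd_self u)) in uc0.
by move: (none c0 u); rewrite /exposed uc0 E negbK udis.
Qed.

Lemma sound_move_leaf_nbr st u y :
  u \notin colored st -> y \notin colored st -> e u y -> (forall z, e u z -> z = y) ->
  ~~ pendant u y -> exists c, sound_move st y c.
Proof.
move=> uU yU euy only_y /subsetPn[z]; rewrite !inE => eyz zu.
have Ly c : legal e st y c.
  rewrite legalE yU; apply/exists_inP; exists u; first by rewrite cnbhd_nbr // e_sym.
  rewrite disjoint_subset; apply/subsetP => x; rewrite inE => /orP[/eqP-> | /only_y->];
  by rewrite inE colorset_uncolored.
have [w /andP[eyw /coloredP[c1 wc1]] | ynocol] := pickP (fun w => e y w && (w \in colored st)).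
  by exists (~~ c1); split => //; right; exists w; rewrite ?negbK.
have zU : z \notin colored st by move: (ynocol z); rewrite /= eyz => /negbT.
exists true; split => //; left; apply/orP; left; apply/card_gt1P; exists u, z.
by rewrite !in_free_nbrs uU zU eyz e_sym euy eq_sym zu.
Qed.

Lemma undominated_move st u c :
  (forall c' w, ~~ exposed st c' w) -> [disjoint cnbhd e u & colorset st c] ->
  exists v c0, sound_move st v c0.
Proof.
move=> none udis; have uU := undominated_uncolored none udis.
have Lu : legal e st u c.
  by rewrite legalE uU; apply/exists_inP; exists u; rewrite ?cnbhd_self.
have [usafe | unsafe] := boolP (safe st u); first by exists u, c; split => //; left.
have [w /andP[euw /coloredP[c0 wc0]] | nocol] := pickP (fun w => e u w && (w \in colored st)).
  exists u, c; split => //; right; exists w => //.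
  case: (c0 =P c) => [E | /eqP/neq_negb <- //].
  by rewrite E (disjointFr udis (cnbhd_nbr euw)) in wc0.
have ufree z : e u z -> z \in free_nbrs st u.
  by move=> euz; rewrite in_free_nbrs euz andbT; move: (nocol z); rewrite /= euz => /negbT.
have [y euy] := no_isolated u.
move: unsafe; rewrite /safe negb_or -leqNgt => /andP[/card_le1_eqP le1 /exists_inPn ynp].
have only_y z : e u z -> z = y by move=> euz; apply: le1; rewrite ?ufree.
have yfree := ufree y euy.
have [c0 ?] := sound_move_leaf_nbr uU (free_nbrs_uncolored yfree) euy only_y (ynp y yfree).
by exists y, c0.
Qed.

Lemma dom_move st : dom_ready st -> ~~ dom_won e st ->
  exists v c, legal e st v c /\ sepy_ready (color st v c).
Proof.
case=> dis notwon one_exposed notdom.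
have [[c w] /= wexp | none] := pickP (fun p : bool * T => exposed st p.1 p.2).
  have /card_gt0P[y yfree] := (sepy_wonPn dis notwon) _ _ wexp.
  exists y, (~~ c); split; first exact: repair_legal wexp yfree.
  apply: sepy_ready_unexposed => [|c' z].
    exact: disjoint_colors_color (free_nbrs_uncolored yfree).
  apply/negP => /(exposed_repair dis wexp yfree)[zexp /eqP]; apply.
  exact: one_exposed zexp wexp.
have {}none c w : ~~ exposed st c w by rewrite (none (c, w)).
have [u [c udis]] := undominated_vertex notdom.
have [v [c0 sound]] := undominated_move none udis.
by exists v, c0; split; [case: sound | apply: sepy_ready_color].
Qed.

Section Game.
Variable n : nat.
Local Notation d := n.+2.

Definition ready st k : Prop := if k is 0 then sepy_ready st else dom_ready st.

Lemma sepy_ready_ready st k : sepy_ready st -> ready st k.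
Proof. by case: k => // k; apply: sepy_ready_dom_ready. Qed.

Section Turn.
Variable st : state T.
Hypothesis IH : forall st', #|~: colored st'| < #|~: colored st| ->
  forall k, ready st' k -> domWinsD e d 1 k st'.

Lemma dom_turn k : dom_ready st -> domWinsD e d 1 k.+1 st.
Proof.
move=> dready; have [won | notdom] := boolP (dom_won e st); first exact: DW_done.
have [v [c [L sready]]] := dom_move dready notdom.
apply: (DW_step (dom_ready_not_ended dready notdom) L).
exact: IH (card_uncolored_color c (legal_uncolored L)) _ (sepy_ready_ready k sready).
Qed.

Lemma sepy_turn : sepy_ready st -> domWinsS e d 1 1 st.
Proof.
move=> sready; have dready := sepy_ready_dom_ready sready.
have [won | notdom] := boolP (dom_won e st); first exact: SW_done.
apply: SW_play (dom_ready_not_ended dready notdom) (dom_turn _ dready) _ => x c _ L.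
have lt_x := card_uncolored_color c (legal_uncolored L).
have [won' | notdom'] := boolP (dom_won e (color st x c)); first exact: SW_done.
have NE' : ~~ ended e (color st x c) by rewrite /ended negb_or sepy_move_not_won.
apply: (SW_play NE') => [|//].
case: (sepy_move_response sready L) => [dready' | [y L' dready'']].
  exact: IH lt_x d dready'.
apply: (DW_step NE' L'); apply: IH n.+1 dready''.
exact: ltn_trans (card_uncolored_color _ (legal_uncolored L')) lt_x.
Qed.

End Turn.

Lemma dom_strategy st k : ready st k -> domWinsD e d 1 k st.
Proof.
have [m] := ubnP #|~: colored st|; elim: m st k => // m IHm st k lt_m.
have IH st' : #|~: colored st'| < #|~: colored st| ->
    forall k, ready st' k -> domWinsD e d 1 k st'.
  by move=> lt' k'; apply: IHm; apply: leq_trans lt' _.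
case: k => [sready | k]; last exact: dom_turn.
have [won | notdom] := boolP (dom_won e st); first exact: DW_done.
exact: DW_end (dom_ready_not_ended (sepy_ready_dom_ready sready) notdom) (sepy_turn IH sready).
Qed.

Lemma sepy_strategy st : sepy_ready st -> domWinsS e d 1 1 st.
Proof. exact: sepy_turn (fun st' _ k => @dom_strategy st' k). Qed.

End Game.

End ColouringGame.

Theorem theorem10 (T : finType) (e : rel T)
  (e_sym : symmetric e) (e_irr : irreflexive e)
  (no_isolated : forall v : T, exists u : T, e v u)
  (d : nat) (hd : 2 <= d) :
  dom_wins_dom_first e d 1 /\ dom_wins_sepy_first e d 1.
Proof.
case: d hd => [|[|n]] // _; have init := sepy_ready_init e.
split; first exact: dom_strategy e_sym e_irr no_isolated n _ _ (sepy_ready_ready _ init).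
exact: sepy_strategy e_sym e_irr no_isolated n _ init.
Qed.
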